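(* Let $\mathcal H$ be a Hilbert space, $\mathcal T,\widehat{\mathcal T}:\mathcal H\to\mathcal H$ bounded linear operators and $q,p,\widehat q,\widehat p\in\mathcal H$, and let $\Delta_{\mathcal T},\Delta_p,\Delta_q\ge0$ satisfy $\|\widehat{\mathcal T}-\mathcal T\|\le\Delta_{\mathcal T}$, $\|\widehat p-p\|\le\Delta_p$, $\|\widehat q-q\|\le\Delta_q$. For $\lambda>0$ let $\widehat\theta_\lambda$ be any minimizer over $\theta'\in\mathcal H$ of $\|\widehat{\mathcal T}\theta'-\widehat q+\widehat p\|+\lambda\|\theta'\|$. Then $$\|\mathcal T\widehat\theta_\lambda-q+p\|\le\max\Big\{1,\frac{\Delta_{\mathcal T}}{\lambda}\Big\}\inf_{\theta'\in\mathcal H}\Big(\|\mathcal T\theta'-q+p\|+(\Delta_{\mathcal T}+\lambda)\|\theta'\|\Big)+\max\Big\{2,1+\frac{\Delta_{\mathcal T}}{\lambda}\Big\}(\Delta_q+\Delta_p).$$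
   Context: $\|\cdot\|$ denotes the Hilbert space norm on elements and the operator norm on operators. *)

From HB Require Import structures.
From mathcomp Require Import all_boot all_order all_algebra.
From mathcomp Require Import all_classical all_reals all_analysis.
Set Implicit Arguments. Unset Strict Implicit. Unset Printing Implicit Defensive.
Import Order.TTheory GRing.Theory Num.Theory.
Import numFieldNormedType.Exports.
Local Open Scope classical_set_scope.
Local Open Scope ring_scope.

(* ip is a real inner product on V inducing the norm of V:
   symmetric, linear in the first argument, and <x,x> = |x|^2
   (positive definiteness then follows from the norm axioms). *)
Definition is_inner_product {R : realType} {V : normedModType R}
  (ip : V -> V -> R) : Prop :=
  (forall x y, ip x y = ip y x) /\
  (forall (a : R) x y z, ip (a *: x + y) z = a * ip x z + ip y z) /\
  (forall x, ip x x = `|x| ^+ 2).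

Definition is_hilbert {R : realType} (V : completeNormedModType R) : Prop :=
  exists ip : V -> V -> R, is_inner_product ip.

Definition opnorm {R : realType} {V : normedModType R} (f : V -> V) : R :=
  sup [set `|f x| | x in [set x : V | `|x| <= 1]].

From HB Require Import structures.
From mathcomp Require Import all_boot all_order all_algebra.
From mathcomp Require Import all_classical all_reals all_analysis.
From mathcomp Require Import ssrAC lra.
Import Order.TTheory GRing.Theory Num.Theory.
Import numFieldNormedType.Exports.
Local Open Scope classical_set_scope.
Local Open Scope ring_scope.

(* Write r(t) = |T t - q + p| for the true residual and rh(t) = |Th t - qh + ph|
   for the perturbed one.  Since |Th - T| <= DT in operator norm, the two
   residuals differ by at most DT |t| + (Dq + Dp) at every t.  Plugging this
   into the minimality of thh for rh + lam |.| gives, for every competitor t,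
     r(thh) <= M (r(t) + (DT + lam)|t|) + (M + 1)(Dq + Dp),
   with M = max 1 (DT / lam), because DT |thh| <= M lam |thh|.  Taking the
   infimum over t and noting max 2 (1 + DT/lam) = M + 1 gives the theorem. *)

Section OperatorNorm.
Variables (R : realType) (V W : normedModType R).

(* A continuous linear map between normed spaces has a nonnegative Lipschitz
   constant; this is what makes the operator norm finite. *)
Lemma continuous_linear_bound (f : {linear V -> W}) :
  continuous f -> exists k : R, 0 <= k /\ forall x, `|f x| <= k * `|x|.
Proof.
move=> cf; have /linear_boundedP [M [_ HM]] := continuous_linear_bounded 0 (cf 0).
exists (Num.max (M + 1) 0); split; first by rewrite le_max lexx orbT.
by apply: HM; rewrite lt_max ltrDl ltr01.
Qed.

(* One normalizes x to
   the unit ball and uses that opnorm f is an upper bound of |f| there. *)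
Lemma opnorm_le (f : W -> W) (k : R) :
  (forall (a : R) x, f (a *: x) = a *: f x) ->
  0 <= k -> (forall x, `|f x| <= k * `|x|) ->
  forall x, `|f x| <= opnorm f * `|x|.
Proof.
move=> fZ k0 fk x.
have [->|x0] := eqVneq x 0.
  by rewrite -(scale0r 0) fZ !scale0r normr0 mulr0.
have nx : 0 < `|x| by rewrite normr_gt0.
have hub : has_ubound [set `|f z| | z in [set z : W | `|z| <= 1]].
  exists k => _ [z /= hz <-].
  by apply: (le_trans (fk z)); rewrite -[leRHS]mulr1 ler_wpM2l.
have unit_x : `| `|x|^-1 *: x| <= 1.
  by rewrite normrZ normfV normr_id mulVf // gt_eqF.
have := ub_le_sup hub (ex_intro2 _ _ (`|x|^-1 *: x) unit_x erefl).
rewrite /opnorm fZ normrZ normfV normr_id ler_pdivrMl // mulrC; exact.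
Qed.

End OperatorNorm.
Arguments continuous_linear_bound {R V W f}.

Lemma residual_perturbation (R : realType) (V : normedModType R)
  (T Th : V -> V) (q p qh ph : V) (DT Dp Dq : R) :
  (forall t, `|Th t - T t| <= DT * `|t|) ->
  `|ph - p| <= Dp -> `|qh - q| <= Dq ->
  forall t, `|(T t - q + p) - (Th t - qh + ph)| <= DT * `|t| + (Dq + Dp).
Proof.
move=> hT hp hq t.
have -> : (T t - q + p) - (Th t - qh + ph) = - (Th t - T t) + (qh - q) - (ph - p).
  by rewrite !opprD !opprK [LHS](AC (3*(3))%AC ((4*1)*(5*2)*(6*3))%AC).
rewrite [leRHS]addrA; apply: (le_trans (ler_normB _ _)).
apply: lerD => //; apply: (le_trans (ler_normD _ _)).
by apply: lerD; rewrite ?normrN.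
Qed.
Arguments residual_perturbation {R V T Th q p qh ph DT Dp Dq}.

Section RobustMinimizer.
Variables (R : realType) (X : Type).
Variables (r rh n : X -> R) (DT D lam : R) (x0 : X).
Hypothesis lam_gt0 : 0 < lam.
Hypothesis rh_ge0 : forall t, 0 <= rh t.
Hypothesis n_ge0 : forall t, 0 <= n t.
Hypothesis r_close : forall t, `|r t - rh t| <= DT * n t + D.
Hypothesis x0_min : forall t, rh x0 + lam * n x0 <= rh t + lam * n t.

Lemma robust_minimizer_bound t :
  r x0 <= Num.max 1 (DT / lam) * (r t + (DT + lam) * n t)
          + (Num.max 1 (DT / lam) + 1) * D.
Proof.
set M := Num.max 1 (DT / lam).
have M1 : 1 <= M by rewrite le_max lexx.
have DT_le_Mlam : DT <= M * lam by rewrite -ler_pdivrMr // le_max lexx orbT.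
have close_x0 : r x0 <= rh x0 + DT * n x0 + D.
  by have := r_close x0; rewrite ler_norml; lra.
have close_t : rh t <= r t + DT * n t + D.
  by have := r_close t; rewrite ler_norml; lra.
have penalty_x0 : rh x0 + DT * n x0 <= M * (rh x0 + lam * n x0).
  rewrite mulrDr mulrA; apply: lerD; last by rewrite ler_wpM2r.
  by rewrite -[leLHS]mul1r ler_wpM2r.
have minimality : M * (rh x0 + lam * n x0) <= M * (r t + (DT + lam) * n t + D).
  rewrite ler_pM2l ?(lt_le_trans ltr01) //; apply: (le_trans (x0_min t)).
  by rewrite mulrDl; lra.
by rewrite mulrDr in minimality; lra.
Qed.

End RobustMinimizer.
Arguments robust_minimizer_bound {R X r rh n DT D lam x0}.

Lemma le_scaled_inf (R : realType) (X : Type) (g : X -> R) (a M c : R) (x : X) :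
  0 < M -> (forall t, a <= M * g t + c) ->
  a <= M * inf [set g t | t in [set: X]] + c.
Proof.
move=> M0 hg; rewrite -lerBlDr mulrC -ler_pdivrMr //.
apply: lb_le_inf; first by exists (g x), x.
by move=> _ [t _ <-]; rewrite ler_pdivrMr // lerBlDr mulrC.
Qed.

Lemma max2_shift (R : realType) (x : R) :
  Num.max 2 (1 + x) = Num.max 1 x + 1.
Proof.
rewrite !maxEle; case: ifPn => h1; case: ifPn => h2;
  by move: h1 h2; rewrite -?ltNge => h1 h2; lra.
Qed.

Theorem lemma8 (R : realType) (H : completeNormedModType R)
  (hH : is_hilbert H)
  (T Th : {linear H -> H}) (cT : continuous T) (cTh : continuous Th)
  (q p qh ph : H) (DT Dp Dq : R)
  (hDT : 0 <= DT) (hDp : 0 <= Dp) (hDq : 0 <= Dq)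
  (hT : opnorm (fun x => Th x - T x) <= DT)
  (hp : `|ph - p| <= Dp) (hq : `|qh - q| <= Dq)
  (lam : R) (hlam : 0 < lam) (thh : H)
  (hmin : forall t : H,
      `|Th thh - qh + ph| + lam * `|thh| <= `|Th t - qh + ph| + lam * `|t|) :
  `|T thh - q + p| <=
    Num.max 1 (DT / lam) *
      inf [set `|T t - q + p| + (DT + lam) * `|t| | t in [set: H]]
    + Num.max 2 (1 + DT / lam) * (Dq + Dp).
Proof.
have [kT [kT0 hkT]] := continuous_linear_bound cT.
have [kTh [kTh0 hkTh]] := continuous_linear_bound cTh.
have opT : forall t, `|Th t - T t| <= DT * `|t|.
  move=> t; apply: le_trans (ler_wpM2r (normr_ge0 t) hT).
  apply: (@opnorm_le _ _ (fun x => Th x - T x) (kTh + kT)); rewrite ?addr_ge0 //.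
    by move=> a x; rewrite scalerBr !linearZ.
  by move=> x; rewrite mulrDl (le_trans (ler_normB _ _)) ?lerD.
have close t : `| `|T t - q + p| - `|Th t - qh + ph| | <= DT * `|t| + (Dq + Dp).
  exact: le_trans (ler_dist_dist _ _) (residual_perturbation opT hp hq t).
rewrite max2_shift; apply: (@le_scaled_inf _ _ _ _ _ _ 0) => [|t].
  by rewrite (lt_le_trans ltr01) // le_max lexx.
exact: (robust_minimizer_bound (r := fun t => `|T t - q + p|)
  (rh := fun t => `|Th t - qh + ph|) (n := fun t => `|t|) hlam
  (fun t => normr_ge0 _) (fun t => normr_ge0 t) close hmin t).
Qed.
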